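(* In the setting below, for all $i,j\in\{1,\ldots,N\}$, the coefficient of $b_j$ in the expansion of the class of $J\,b_i$ in the basis $B$ of $\mathcal{A}$ equals $\mathrm{Tr}(b_i\,b_j^* )$. (That is, the multiplication-by-$J$ map on $\mathcal{A}$ has matrix entries $\mathrm{Tr}(b_ib_j^* )$.)
   Context: Setting: $\mathbb{K}$ algebraically closed, $\mathbf{x}=(x_1,\ldots,x_m)$, $f_1,\ldots,f_s\in\mathbb{K}[\mathbf{x}]$ of degrees $d_i$, $\mathcal{I}=\langle f_1,\ldots,f_s\rangle$, $\mathcal{A}=\mathbb{K}[\mathbf{x}]/\mathcal{I}$ finite dimensional of dimension $N$. $\mathbb{K}[\mathbf{x}]_k$ = polynomials of total degree $\le k$; $\langle f_1,\ldots,f_s\rangle_d:=\{\sum_i q_if_i:\deg q_i\le d-d_i\}$; $\mathrm{Mon}_\le(\Delta)$ = monomials of degree $\le\Delta$. $B=[b_1,\ldots,b_N]$ are monomials $b_i=\mathbf{x}^{\alpha_i}$ of degree $\le D$ whose classes form a basis of $\mathcal{A}$, and $\Delta\ge2D$ is such that their classes also form a basis of $\mathbb{K}[\mathbf{x}]_\Delta/(\langle f_1,\ldots,f_s\rangle_{\Delta+1}\cap\mathbb{K}[\mathbf{x}]_\Delta)$. $\mathrm{Mac}_\Delta(\mathbf{f})$ is a matrix whose rows are the coefficient vectors (w.r.t. $\mathrm{Mon}_\le(\Delta)$) of a basis of $\langle f_1,\ldots,f_s\rangle_{\Delta+1}\cap\mathbb{K}[\mathbf{x}]_\Delta$. Fix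 $\mathbf{y}=(y_\alpha)_{|\alpha|\le\Delta}$ with $\mathrm{Mac}_\Delta(\mathbf{f})\mathbf{y}=0$ such that the moment matrix $\mathfrak{M}_B(\mathbf{y})=[y_{\alpha_i+\alpha_j}]_{i,j=1}^N$ is invertible. Define $\Lambda\in\mathcal{A}^*$ by $\Lambda(g)=\sum_{i}y_{\alpha_i}g_i$ where $g=\sum_i g_ib_i$ in $\mathcal{A}$. Write $\mathfrak{M}_B(\mathbf{y})^{-1}=[c_{ij}]$ and $b_i^*:=\sum_{j=1}^N c_{ji}b_j$. The generalized Jacobian $J$ is the unique element of $\mathrm{span}(b_1,\ldots,b_N)$ congruent to $\sum_{i=1}^N b_ib_i^*$ modulo $\mathcal{I}$. For $h\in\mathcal{A}$, $\mathrm{Tr}(h)$ is the trace of the $\mathbb{K}$-linear map $\mathcal{A}\to\mathcal{A}$, $g\mapsto hg$. *)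

From HB Require Import structures.
From mathcomp Require Import all_boot all_order all_algebra.
From mathcomp Require Import mpoly.
Set Implicit Arguments. Unset Strict Implicit. Unset Printing Implicit Defensive.
Import Order.TTheory GRing.Theory.
Local Open Scope ring_scope.

Section Defs.
Variables (K : fieldType) (m s : nat) (f : 'I_s -> {mpoly K[m]}).

(* total degree, with the convention deg 0 = 0 (only used for nonzero q) *)
Definition tdeg (p : {mpoly K[m]}) : nat := (msize p).-1.

Definition in_ideal (p : {mpoly K[m]}) : Prop :=
  exists q : 'I_s -> {mpoly K[m]}, p = \sum_(k < s) q k * f k.

Definition in_ideal_trunc (d : nat) (p : {mpoly K[m]}) : Prop :=
  exists q : 'I_s -> {mpoly K[m]}, p = \sum_(k < s) q k * f k /\
    forall k, q k != 0 -> (tdeg (q k) + tdeg (f k) <= d)%N.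

(* K[x]_k : polynomials of total degree <= k *)
Definition deg_le (k : nat) (p : {mpoly K[m]}) : Prop := (msize p <= k.+1)%N.

Variables (N : nat) (alpha : 'I_N -> 'X_{1..m}).

Definition bmon (i : 'I_N) : {mpoly K[m]} := 'X_[alpha i].

Definition combB (c : 'I_N -> K) : {mpoly K[m]} := \sum_(j < N) c j *: bmon j.

(* the classes of b_1..b_N form a basis of the quotient of the space P
   (a subspace of K[x]) by the subspace S: every element of P is congruent
   modulo S to a unique linear combination of the b_j *)
Definition basis_mod (P S : {mpoly K[m]} -> Prop) : Prop :=
  forall p, P p -> exists! c : 'I_N -> K, S (p - combB c).

(* t = Tr(h) : trace of the multiplication-by-h map on A = K[x]/I,
   computed as the trace of its matrix in the basis B *)
Definition is_traceA (h : {mpoly K[m]}) (t : K) : Prop :=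
  exists M : 'M[K]_N,
    (forall i, in_ideal (h * bmon i - combB (fun j => M i j))) /\ t = \tr M.

Definition pair_y (y : 'X_{1..m} -> K) (p : {mpoly K[m]}) : K :=
  \sum_(a <- msupp p) mcoeff a p * y a.

Definition moment_mx (y : 'X_{1..m} -> K) : 'M[K]_N :=
  \matrix_(i, j) y (alpha i + alpha j)%MM.

Definition bstar (y : 'X_{1..m} -> K) (i : 'I_N) : {mpoly K[m]} :=
  \sum_(j < N) (invmx (moment_mx y)) j i *: bmon j.

End Defs.

Arguments bmon K [m N] alpha i.
Arguments combB K [m N] alpha c.
Arguments basis_mod K [m N] alpha P S.

(* Let coord g be the coordinate vector of the class of g in the basis B and
   Lambda g := sum_k coord(g)_k y_(alpha_k).  Because the monomials b_k b_l have
   degree at most 2D <= Delta, the hypothesis Mac_Delta(f) y = 0 gives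
   Lambda(b_k b_l) = y_(alpha_k + alpha_l), so the b_l^* form the basis dual to B
   for the bilinear form (g, h) |-> Lambda(g h), i.e. Lambda(g b_l^* ) = coord(g)_l.
   Hence Tr(h) = sum_k Lambda(h b_k b_k^* ) = Lambda(h J), and for h = b_i b_j^*
   this is Lambda((J b_i) b_j^* ) = coord(J b_i)_j. *)

From HB Require Import structures.
From mathcomp Require Import all_boot all_order all_algebra.
From mathcomp Require Import mpoly.
From Stdlib Require Import ClassicalEpsilon.
Set Implicit Arguments. Unset Strict Implicit. Unset Printing Implicit Defensive.
Import GRing.Theory.
Local Open Scope ring_scope.

Section Ideal.
Variables (K : fieldType) (m s : nat) (f : 'I_s -> {mpoly K[m]}).

Lemma in_ideal0 : in_ideal f 0.
Proof. by exists (fun _ => 0); rewrite big1 // => k _; rewrite mul0r. Qed.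

Lemma in_idealD p q : in_ideal f p -> in_ideal f q -> in_ideal f (p + q).
Proof.
move=> [a ->] [b ->]; exists (fun k => a k + b k).
by rewrite -big_split /=; apply: eq_bigr => k _; rewrite mulrDl.
Qed.

Lemma in_idealMl p q : in_ideal f p -> in_ideal f (q * p).
Proof.
move=> [a ->]; exists (fun k => q * a k).
by rewrite mulr_sumr; apply: eq_bigr => k _; rewrite mulrA.
Qed.

Lemma in_idealMr p q : in_ideal f p -> in_ideal f (p * q).
Proof. by rewrite mulrC; apply: in_idealMl. Qed.

Lemma in_idealZ (c : K) p : in_ideal f p -> in_ideal f (c *: p).
Proof.
move=> [a ->]; exists (fun k => c *: a k).
by rewrite scaler_sumr; apply: eq_bigr => k _; rewrite scalerAl.
Qed.

Lemma in_ideal_trunc_in_ideal d p : in_ideal_trunc f d p -> in_ideal f p.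
Proof. by move=> [q [-> _]]; exists q. Qed.

End Ideal.

Section PairY.
Variables (K : fieldType) (m : nat) (y : 'X_{1..m} -> K).

Lemma pair_yE (p : {mpoly K[m]}) r :
  uniq r -> {subset msupp p <= r} -> pair_y y p = \sum_(a <- r) p@_a * y a.
Proof.
move=> ur sub; rewrite /pair_y.
rewrite [RHS](bigID (fun a => a \in msupp p)) /= [X in _ + X]big1 ?addr0;
  last by move=> a /memN_msupp_eq0 ->; rewrite mul0r.
rewrite -[RHS]big_filter; apply: perm_big; apply: uniq_perm => //.
  by rewrite filter_uniq.
by move=> a; rewrite mem_filter; apply/idP/andP => [h|[]//]; split=> //; apply: sub.
Qed.

Lemma pair_y0 : pair_y y 0 = 0.
Proof. by rewrite /pair_y msupp0 big_nil. Qed.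

Lemma pair_yZD (c : K) (p q : {mpoly K[m]}) :
  pair_y y (c *: p + q) = c * pair_y y p + pair_y y q.
Proof.
set r := undup (msupp p ++ msupp q ++ msupp (c *: p + q)).
rewrite !(@pair_yE _ r) ?undup_uniq //;
  try by move=> a ha; rewrite mem_undup !mem_cat ha ?orbT.
rewrite mulr_sumr -big_split /=; apply: eq_bigr => a _.
by rewrite mcoeffD mcoeffZ mulrDl mulrA.
Qed.

Lemma pair_yZ (c : K) (p : {mpoly K[m]}) : pair_y y (c *: p) = c * pair_y y p.
Proof. by rewrite -[c *: p]addr0 pair_yZD pair_y0 addr0. Qed.

Lemma pair_y_sum I (r : seq I) (F : I -> {mpoly K[m]}) :
  pair_y y (\sum_(k <- r) F k) = \sum_(k <- r) pair_y y (F k).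
Proof.
apply: (big_morph _ (fun p q => _) pair_y0) => p q.
by rewrite -[p]scale1r pair_yZD mul1r scale1r.
Qed.

Lemma pair_yX a : pair_y y 'X_[a] = y a.
Proof. by rewrite /pair_y msuppX big_seq1 mcoeffX eqxx mul1r. Qed.

End PairY.

Section Coordinates.
Variables (K : fieldType) (m s : nat) (f : 'I_s -> {mpoly K[m]}).
Variables (N : nat) (alpha : 'I_N -> 'X_{1..m}).
Hypothesis basisB : basis_mod K alpha (fun _ => True) (in_ideal f).

Local Notation b := (bmon K alpha).
Local Notation combB := (combB K alpha).

Lemma combBZD a c1 c2 :
  combB (fun k => a * c1 k + c2 k) = a *: combB c1 + combB c2.
Proof.
rewrite /combB scaler_sumr -big_split /=; apply: eq_bigr => k _.
by rewrite scalerDl scalerA.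
Qed.

Lemma coord_exists p : exists c, in_ideal f (p - combB c).
Proof. by have [c [h _]] := @basisB p I; exists c. Qed.

Definition coord p : 'I_N -> K :=
  proj1_sig (constructive_indefinite_description _ (coord_exists p)).

Lemma coordP p : in_ideal f (p - combB (coord p)).
Proof. exact: proj2_sig (constructive_indefinite_description _ (coord_exists p)). Qed.

Lemma coord_unique p c : in_ideal f (p - combB c) -> coord p = c.
Proof.
by move=> hc; have [c0 [_ u]] := @basisB p I; rewrite -(u _ (coordP p)) (u _ hc).
Qed.

Lemma coord_congr p q : in_ideal f (p - q) -> coord p = coord q.
Proof.
move=> hpq; apply: coord_unique.
by rewrite -(subrK q p) -addrA; apply: in_idealD => //; apply: coordP.
Qed.

Lemma coordZD a p q : coord (a *: p + q) = (fun k => a * coord p k + coord q k).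
Proof.
apply: coord_unique; rewrite combBZD.
have -> : a *: p + q - (a *: combB (coord p) + combB (coord q))
    = a *: (p - combB (coord p)) + (q - combB (coord q)).
  by rewrite scalerBr opprD !addrA; congr (_ + _); rewrite addrAC.
by apply: in_idealD; [apply: in_idealZ|]; apply: coordP.
Qed.

Lemma coord0 : coord 0 = (fun _ => 0).
Proof.
apply: coord_unique; rewrite /combB big1 ?subrr; first exact: in_ideal0.
by move=> k _; rewrite scale0r.
Qed.

Lemma is_traceA_coord h : is_traceA f alpha h (\sum_k coord (h * b k) k).
Proof.
exists (\matrix_(i, k) coord (h * b i) k); split; last first.
  by rewrite /mxtrace; apply: eq_bigr => k _; rewrite mxE.
move=> i; rewrite /combB (eq_bigr (fun k => coord (h * b i) k *: b k)).
  exact: coordP.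
by move=> k _; rewrite mxE.
Qed.

Variable y : 'X_{1..m} -> K.

Definition Lambda p := \sum_k coord p k * y (alpha k).

Lemma LambdaZD a p q : Lambda (a *: p + q) = a * Lambda p + Lambda q.
Proof.
rewrite /Lambda coordZD mulr_sumr -big_split /=; apply: eq_bigr => k _.
by rewrite mulrDl mulrA.
Qed.

Lemma Lambda0 : Lambda 0 = 0.
Proof. by rewrite /Lambda coord0 big1 // => k _; rewrite mul0r. Qed.

Lemma LambdaZ a p : Lambda (a *: p) = a * Lambda p.
Proof. by rewrite -[a *: p]addr0 LambdaZD Lambda0 addr0. Qed.

Lemma Lambda_sum (F : 'I_N -> {mpoly K[m]}) :
  Lambda (\sum_k F k) = \sum_k Lambda (F k).
Proof.
apply: (big_morph _ (fun p q => _) Lambda0) => p q.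
by rewrite -[p]scale1r LambdaZD mul1r scale1r.
Qed.

Lemma Lambda_congr p q : in_ideal f (p - q) -> Lambda p = Lambda q.
Proof. by move=> hpq; rewrite /Lambda (coord_congr hpq). Qed.

Section Truncated.
Variables (D Delta : nat).
Hypothesis deg_alpha : forall i, (mdeg (alpha i) <= D)%N.
Hypothesis le_2D_Delta : (2 * D <= Delta)%N.
Hypothesis basisB_trunc : basis_mod K alpha (deg_le Delta)
    (fun p => in_ideal_trunc f Delta.+1 p /\ deg_le Delta p).
Hypothesis y_kernel :
  forall p, in_ideal_trunc f Delta.+1 p -> deg_le Delta p -> pair_y y p = 0.

Lemma Lambda_bmonM k l : Lambda (b k * b l) = moment_mx alpha y k l.
Proof.
rewrite /bmon -mpolyXD mxE.
have degX : deg_le Delta ('X_[alpha k + alpha l] : {mpoly K[m]}).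
  rewrite /deg_le msizeX mdegD ltnS; apply: leq_trans le_2D_Delta.
  by rewrite mul2n -addnn leq_add.
have [c [[hI hdeg] _]] := basisB_trunc degX.
have /eqP := y_kernel hI hdeg.
rewrite -[_ - _]addrC -scaleN1r pair_yZD pair_yX mulN1r addrC subr_eq0 => /eqP ->.
rewrite /Lambda (coord_unique (in_ideal_trunc_in_ideal hI)) /combB pair_y_sum.
by apply: eq_bigr => l0 _; rewrite pair_yZ pair_yX.
Qed.

End Truncated.

Section DualBasis.
Hypothesis Lambda_bmonM : forall k l, Lambda (b k * b l) = moment_mx alpha y k l.
Hypothesis moment_unit : moment_mx alpha y \in unitmx.

Lemma Lambda_bmon_bstar k l : Lambda (b k * bstar alpha y l) = (k == l)%:R.
Proof.
set M := moment_mx alpha y.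
rewrite /bstar mulr_sumr.
under eq_bigr do rewrite -scalerAr.
rewrite Lambda_sum.
under eq_bigr do rewrite LambdaZ Lambda_bmonM mulrC.
transitivity ((M *m invmx M) k l); first by rewrite mxE.
by rewrite mulmxV // mxE.
Qed.

Lemma Lambda_mul_bstar g l : Lambda (g * bstar alpha y l) = coord g l.
Proof.
rewrite (Lambda_congr (q := combB (coord g) * bstar alpha y l)); last first.
  by rewrite -mulrBl; apply: in_idealMr; apply: coordP.
rewrite /combB mulr_suml.
under eq_bigr do rewrite -scalerAl.
rewrite Lambda_sum (bigD1 l) //= LambdaZ Lambda_bmon_bstar eqxx mulr1.
rewrite big1 ?addr0 // => k /negbTE nkl.
by rewrite LambdaZ Lambda_bmon_bstar nkl mulr0.
Qed.

Lemma trace_LambdaM J h :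
  in_ideal f (J - \sum_k b k * bstar alpha y k) ->
  \sum_k coord (h * b k) k = Lambda (h * J).
Proof.
move=> hJ.
rewrite (Lambda_congr (q := h * \sum_k b k * bstar alpha y k)); last first.
  by rewrite -mulrBr; apply: in_idealMl.
rewrite mulr_sumr Lambda_sum; apply: eq_bigr => k _.
by rewrite mulrA Lambda_mul_bstar.
Qed.

End DualBasis.

End Coordinates.

Theorem proposition3p2 (K : closedFieldType) (m s : nat)
    (f : 'I_s -> {mpoly K[m]}) (N : nat) (alpha : 'I_N -> 'X_{1..m})
    (D Delta : nat) (y : 'X_{1..m} -> K) (J : {mpoly K[m]}) :
  (forall i, mdeg (alpha i) <= D)%N ->
  basis_mod K alpha (fun _ => True) (in_ideal f) ->
  (2 * D <= Delta)%N ->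
  basis_mod K alpha (deg_le Delta)
    (fun p => in_ideal_trunc f Delta.+1 p /\ deg_le Delta p) ->
  (forall p, in_ideal_trunc f Delta.+1 p -> deg_le Delta p -> pair_y y p = 0) ->
  moment_mx alpha y \in unitmx ->
  (exists a : 'I_N -> K, J = combB K alpha a) ->
  in_ideal f (J - \sum_(i < N) bmon K alpha i * bstar alpha y i) ->
  forall (i j : 'I_N) (c : 'I_N -> K),
    in_ideal f (J * bmon K alpha i - combB K alpha c) ->
    is_traceA f alpha (bmon K alpha i * bstar alpha y j) (c j).
Proof.
move=> deg_alpha basisB le_2D_Delta basisB_trunc y_kernel unitM _ hJ i j c hc.
have momentM := Lambda_bmonM basisB deg_alpha le_2D_Delta basisB_trunc y_kernel.
have := is_traceA_coord basisB (bmon K alpha i * bstar alpha y j).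
rewrite (trace_LambdaM momentM unitM _ hJ).
suff -> : Lambda basisB y (bmon K alpha i * bstar alpha y j * J) = c j by [].
by rewrite mulrAC [_ * J]mulrC (Lambda_mul_bstar momentM unitM) (coord_unique basisB hc).
Qed.
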